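(* For any two POPs $p$ and $q$, $p+q\sim q+p$.
   Context: A partially ordered pattern (POP) $p$ of size $k$ is a partial order $\le_p$ on $[k]=\{1,\dots,k\}$. A permutation $\pi=\pi_1\cdots\pi_n$ contains $p$ if there are indices $i_1<\dots<i_k$ with $\pi_{i_j}<\pi_{i_m}$ whenever $j<_p m$; otherwise it avoids $p$. $\mathfrak S_n(p)$ is the set of permutations of $[n]$ avoiding $p$, and $p\sim q$ (Wilf-equivalence) means $|\mathfrak S_n(p)|=|\mathfrak S_n(q)|$ for all $n\ge 1$. For a POP $p$ of size $k$ and a POP $q$ of size $l$, the disjoint sum $p+q$ is the POP of size $k+l$ on $[k+l]$ in which $i\le j$ for $i,j\in[k]$ iff $i\le_p j$, $k+i\le k+j$ for $i,j\in[l]$ iff $i\le_q j$, and no element of $[k]$ is comparable with an element of $[k+1,k+l]$. *)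

From mathcomp Require Import all_boot all_fingroup.
Set Implicit Arguments. Unset Strict Implicit. Unset Printing Implicit Defensive.

(* A POP of size k: a partial order (reflexive, antisymmetric, transitive,
   boolean relation) on 'I_k, representing [k] = {1,..,k} shifted to {0,..,k-1}. *)
Definition is_pop (k : nat) (p : rel 'I_k) : Prop :=
  reflexive p /\ antisymmetric p /\ transitive p.

Definition pop_lt (k : nat) (p : rel 'I_k) (j m : 'I_k) : bool := (j != m) && p j m.

Definition contains (k n : nat) (p : rel 'I_k) (pi : {perm 'I_n}) : bool :=
  [exists i : {ffun 'I_k -> 'I_n},
    [forall j : 'I_k, forall m : 'I_k, (j < m) ==> (i j < i m)] &&
    [forall j : 'I_k, forall m : 'I_k, pop_lt p j m ==> (pi (i j) < pi (i m))]].

Definition avoids (k n : nat) (p : rel 'I_k) (pi : {perm 'I_n}) : bool :=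
  ~~ contains p pi.

Definition num_avoiders (k n : nat) (p : rel 'I_k) : nat :=
  #|[set pi : {perm 'I_n} | avoids p pi ]|.

Definition wilf_equiv (k l : nat) (p : rel 'I_k) (q : rel 'I_l) : Prop :=
  forall n : nat, 1 <= n -> num_avoiders n p = num_avoiders n q.

Definition pop_sum (k l : nat) (p : rel 'I_k) (q : rel 'I_l) : rel 'I_(k + l) :=
  fun a b =>
    match split a, split b with
    | inl a', inl b' => p a' b'
    | inr a', inr b' => q a' b'
    | _, _ => false
    end.

From mathcomp Require Import all_boot all_fingroup.
From mathcomp Require Import zify.
Set Implicit Arguments. Unset Strict Implicit. Unset Printing Implicit Defensive.

(* Fix a permutation of length n and let F m (resp. G m) say that it avoids p in
   its first m positions (resp. q in its last n - m positions).  F is antitone,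
   G is monotone, and the permutation avoids p + q iff F m || G m for all m <= n.
   Counting through the threshold where F and G switch gives
     |S_n(p + q)| + sum_m #(F m && G m) = |S_n(p)| + |S_n(q)| + sum_m #(F m && G m.+1),
   and both sums are symmetric in p and q, because exchanging a prefix block
   of positions with a suffix block (across a gap of width 0 or 1) is a
   bijection between the permutations they count.  Nothing about p and q being
   partial orders is used. *)

Section Occurrences.
Variables (k n : nat) (p : rel 'I_k) (pi : {perm 'I_n}).

Definition contains_in (lo hi : nat) : bool :=
  [exists i : {ffun 'I_k -> 'I_n},
    [&& [forall j : 'I_k, forall m : 'I_k, (j < m) ==> (i j < i m)],
        [forall j : 'I_k, lo <= i j < hi] &
        [forall j : 'I_k, forall m : 'I_k, pop_lt p j m ==> (pi (i j) < pi (i m))]]].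

Definition occurrence_in (lo hi : nat) (i : 'I_k -> 'I_n) : Prop :=
  [/\ forall j m : 'I_k, j < m -> i j < i m,
      forall j, lo <= i j < hi &
      forall j m, pop_lt p j m -> pi (i j) < pi (i m)].

Lemma contains_inP lo hi :
  reflect (exists i, occurrence_in lo hi i) (contains_in lo hi).
Proof.
apply: (iffP existsP) => [[i /and3P[/forallP inc /forallP win /forallP pat]]|].
  exists i; split=> // j m; [exact: (implyP (forallP (inc j) m))|].
  exact: (implyP (forallP (pat j) m)).
move=> [i [inc win pat]]; exists (finfun i); apply/and3P; split.
- by apply/forallP=> j; apply/forallP=> m; apply/implyP; rewrite !ffunE; apply: inc.
- by apply/forallP=> j; rewrite ffunE.
- by apply/forallP=> j; apply/forallP=> m; apply/implyP; rewrite !ffunE; apply: pat.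
Qed.

Lemma contains_in_full : contains p pi = contains_in 0 n.
Proof.
apply/existsP/contains_inP => [[i /andP[/forallP inc /forallP pat]]|[i [inc _ pat]]].
  exists i; split=> // [j m jm|j|j m jmp]; last exact: (implyP (forallP (pat j) m)).
    exact: (implyP (forallP (inc j) m)).
  by rewrite ltn_ord.
exists (finfun i); apply/andP; split.
  by apply/forallP=> j; apply/forallP=> m; apply/implyP; rewrite !ffunE; apply: inc.
by apply/forallP=> j; apply/forallP=> m; apply/implyP; rewrite !ffunE; apply: pat.
Qed.

Lemma contains_in_widen lo hi lo' hi' :
  lo' <= lo -> hi <= hi' -> contains_in lo hi -> contains_in lo' hi'.
Proof.
move=> le_lo le_hi /contains_inP[i [inc win pat]]; apply/contains_inP.
by exists i; split=> // j; have := win j; lia.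
Qed.

End Occurrences.

Lemma contains_in_mulg k n (p : rel 'I_k) (s pi : {perm 'I_n}) lo hi lo' hi' :
  (forall x y : 'I_n, lo <= x < hi -> lo <= y < hi -> x < y -> s x < s y) ->
  (forall x : 'I_n, lo <= x < hi -> lo' <= s x < hi') ->
  contains_in p (s * pi)%g lo hi -> contains_in p pi lo' hi'.
Proof.
move=> s_inc s_win /contains_inP[i [inc win pat]]; apply/contains_inP.
exists (s \o i); split=> [j m jm|j|j m jmp] /=; first exact: s_inc (inc _ _ jm).
  exact: s_win.
by rewrite -!permM; apply: pat.
Qed.

Lemma perm_of_nat n (f : nat -> nat) :
  (forall y, y < n -> f y < n) ->
  (forall x y, x < n -> y < n -> f x = f y -> x = y) ->
  exists s : {perm 'I_n}, forall x, val (s x) = f x.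
Proof.
move=> f_lt f_inj; pose g (x : 'I_n) := Ordinal (f_lt x (ltn_ord x)).
have g_inj : injective g.
  by move=> x y /(congr1 val) /= /f_inj e; apply: val_inj; apply: e.
by exists (perm g_inj) => x; rewrite permE.
Qed.

Section BlockSwap.
Variables a g b : nat.

Definition block_swap (y : nat) : nat :=
  if y < b then y + (a + g) else if y < b + g then y - b + a else y - (b + g).

Lemma block_swap_low y : y < b -> block_swap y = y + (a + g).
Proof. by move=> lt_yb; rewrite /block_swap lt_yb. Qed.

Lemma block_swap_high y : b + g <= y -> block_swap y = y - (b + g).
Proof. by move=> le_y; rewrite /block_swap ifF ?ifF //; apply/negbTE; lia. Qed.

Lemma block_swap_lt y : y < a + g + b -> block_swap y < a + g + b.
Proof. by rewrite /block_swap; case: ifP => ?; [|case: ifP => ?]; lia. Qed.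

Lemma block_swap_inj x y : x < a + g + b -> y < a + g + b ->
  block_swap x = block_swap y -> x = y.
Proof.
by rewrite /block_swap; case: ifP => ?; [|case: ifP => ?]; case: ifP => ?;
  try case: ifP => ?; lia.
Qed.

End BlockSwap.

Definition avoid_blocks k l n (p : rel 'I_k) (q : rel 'I_l) (a c : nat) :=
  [set pi : {perm 'I_n} | ~~ contains_in p pi 0 a && ~~ contains_in q pi c n].

Lemma card_avoid_blocks_le k l n (p : rel 'I_k) (q : rel 'I_l) a g b :
  a + g + b = n ->
  #|avoid_blocks n p q a (a + g)| <= #|avoid_blocks n q p b (b + g)|.
Proof.
move=> <-; have [s sE] := perm_of_nat (@block_swap_lt a g b) (@block_swap_inj a g b).
rewrite -(card_imset _ (mulgI s)); apply: subset_leq_card.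
apply/subsetP=> _ /imsetP[pi + ->]; rewrite !inE => /andP[avoid_p avoid_q].
apply/andP; split.
- apply: contra avoid_q; apply: contains_in_mulg => [x y|x]; rewrite !sE.
    by move=> /andP[_ ltx] /andP[_ lty]; rewrite !block_swap_low //; lia.
  by move=> /andP[_ ltx]; rewrite block_swap_low //; lia.
- apply: contra avoid_p; apply: contains_in_mulg => [x y|x]; rewrite !sE.
    move=> /andP[lex _] /andP[ley _].
    by rewrite !block_swap_high //; lia.
  by move=> /andP[lex ltx]; rewrite block_swap_high //; lia.
Qed.

Definition gap_sum k l n (p : rel 'I_k) (q : rel 'I_l) (g : nat) : nat :=
  \sum_(m < n.+1 - g) #|avoid_blocks n p q m (m + g)|.

Lemma gap_sumC k l n (p : rel 'I_k) (q : rel 'I_l) g :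
  gap_sum n p q g = gap_sum n q p g.
Proof.
suff gap_sum_le k' l' (p' : rel 'I_k') (q' : rel 'I_l') :
    gap_sum n p' q' g <= gap_sum n q' p' g.
  by apply/eqP; rewrite eqn_leq !gap_sum_le.
rewrite /gap_sum [X in _ <= X](reindex_inj rev_ord_inj) /=.
apply: leq_sum => m _; apply: card_avoid_blocks_le.
by have := ltn_ord m; lia.
Qed.

Section DisjointSum.
Variables (k l n : nat) (p : rel 'I_k) (q : rel 'I_l) (pi : {perm 'I_n}).

Lemma pop_lt_sum_lshift (a b : 'I_k) :
  pop_lt (pop_sum p q) (lshift l a) (lshift l b) = pop_lt p a b.
Proof.
by rewrite /pop_lt /pop_sum !(unsplitK (inl _ _)) (inj_eq (@lshift_inj _ _)).
Qed.

Lemma pop_lt_sum_rshift (a b : 'I_l) :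
  pop_lt (pop_sum p q) (rshift k a) (rshift k b) = pop_lt q a b.
Proof.
by rewrite /pop_lt /pop_sum !(unsplitK (inr _ _)) (inj_eq (@rshift_inj _ _)).
Qed.

Lemma contains_in_sum lo m hi : lo <= m <= hi ->
  contains_in p pi lo m -> contains_in q pi m hi ->
  contains_in (pop_sum p q) pi lo hi.
Proof.
move=> le_m /contains_inP[i1 [inc1 win1 pat1]] /contains_inP[i2 [inc2 win2 pat2]].
apply/contains_inP.
exists (fun x => match split x with inl j => i1 j | inr j => i2 j end); split.
- move=> x y; case: splitP => j ->; case: splitP => j' -> /= lt_xy.
  + exact: inc1.
  + by have := win1 j; have := win2 j'; lia.
  + by have := ltn_ord j'; lia.
  + by apply: inc2; lia.
- by move=> x; case: splitP => j _; [have := win1 j | have := win2 j]; lia.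
- move=> x y /=; rewrite /pop_lt /pop_sum.
  case: splitP => j ex; case: splitP => j' ey /andP[ne jj'] //;
    [apply: pat1 | apply: pat2]; rewrite /pop_lt jj' andbT;
    by apply: contra ne => /eqP e; apply/eqP/val_inj; rewrite /= ex ey e.
Qed.

Lemma contains_sum_split :
  contains (pop_sum p q) pi ->
  exists2 m, m <= n & contains_in p pi 0 m && contains_in q pi m n.
Proof.
rewrite contains_in_full => /contains_inP[i [inc _ pat]].
pose m := \max_(j : 'I_k) (i (lshift l j)).+1.
have lt_m j : i (lshift l j) < m by apply: (leq_bigmax j).
have le_m j : m <= i (rshift k j).
  by apply/bigmax_leqP => j' _; apply: inc => /=; have := ltn_ord j'; lia.
exists m; first by apply/bigmax_leqP => j _; apply: ltn_ord.
apply/andP; split; apply/contains_inP.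
- exists (i \o lshift l); split=> [a b ab|a|a b ab] /=; first exact: inc.
    by rewrite lt_m.
  by apply: pat; rewrite pop_lt_sum_lshift.
- exists (i \o @rshift k l); split=> [a b ab|a|a b ab] /=.
  + by apply: inc => /=; lia.
  + by rewrite le_m ltn_ord.
  + by apply: pat; rewrite pop_lt_sum_rshift.
Qed.

Lemma contains_pop_sum :
  contains (pop_sum p q) pi =
  has (fun m => contains_in p pi 0 m && contains_in q pi m n) (iota 0 n.+1).
Proof.
apply/idP/hasP => [/contains_sum_split[m le_mn ?]|[m + /andP[cp cq]]].
  by exists m; rewrite // mem_iota.
by rewrite mem_iota => /= lt_m; rewrite contains_in_full (contains_in_sum _ cp cq).
Qed.

End DisjointSum.

Section Thresholds.
Variables F G : nat -> bool.
Hypothesis F_anti : forall a b, a <= b -> F b -> F a.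
Hypothesis G_mono : forall a b, a <= b -> G a -> G b.

Let cover n := all (fun m => F m || G m) (iota 0 n.+1).

Lemma cover_threshold_count n :
  cover n + \sum_(m < n.+1) (F m && G m) =
  F n + G 0 + \sum_(m < n) (F m && G m.+1).
Proof.
elim: n => [|n IHn].
  by rewrite big_ord1 big_ord0 /cover /=; case: (F 0); case: (G 0).
have coverS : cover n.+1 = cover n && (F n.+1 || G n.+1).
  by rewrite /cover -addn1 iotaD all_cat /= andbT.
have F_cover : F n ==> cover n.
  by apply/implyP=> Fn; apply/allP=> m; rewrite mem_iota ltnS => /andP[_ /F_anti->].
have cover_FG : cover n ==> F n || G n.
  by apply/implyP=> /allP/(_ n); rewrite mem_iota ltnS leqnn; apply.
have F_step : F n.+1 ==> F n by apply/implyP/F_anti.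
have G_step : G n ==> G n.+1 by apply/implyP/G_mono.
rewrite coverS [in LHS]big_ord_recr [in RHS]big_ord_recr /=; move: IHn.
move: (\sum_(m < n.+1) _) (\sum_(m < n) _) (G 0) => s0 s1 g0.
by case: (cover n) (F n) (F n.+1) (G n) (G n.+1) F_cover cover_FG F_step G_step
  => [] [] [] [] [] //=; lia.
Qed.

End Thresholds.

Lemma card_set_nat_sum (T : finType) (B : pred T) : #|[set x | B x]| = \sum_x B x.
Proof. by rewrite -sum1dep_card big_mkcond; apply: eq_bigr => x _; case: (B x). Qed.

Lemma num_avoiders_pop_sum k l n (p : rel 'I_k) (q : rel 'I_l) :
  num_avoiders n (pop_sum p q) + gap_sum n p q 0 =
  num_avoiders n p + num_avoiders n q + gap_sum n p q 1.
Proof.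
rewrite /num_avoiders /gap_sum subn0 subn1 /= !card_set_nat_sum.
under [X in _ + X = _]eq_bigr do rewrite addn0 card_set_nat_sum.
under [X in _ = _ + X]eq_bigr do rewrite addn1 card_set_nat_sum.
rewrite exchange_big [in RHS]exchange_big -!big_split.
apply: eq_bigr => pi _.
have F_anti a b : a <= b -> ~~ contains_in p pi 0 b -> ~~ contains_in p pi 0 a.
  by move=> le_ab; apply: contra; apply: contains_in_widen.
have G_mono a b : a <= b -> ~~ contains_in q pi a n -> ~~ contains_in q pi b n.
  by move=> le_ab; apply: contra; apply: contains_in_widen.
rewrite /avoids contains_pop_sum !contains_in_full -all_predC.
rewrite (eq_all (a2 := fun m => ~~ contains_in p pi 0 m || ~~ contains_in q pi m n));
  last by move=> m; rewrite /= negb_and.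
exact: cover_threshold_count F_anti G_mono n.
Qed.

Theorem theorem1p5 (k l : nat) (p : rel 'I_k) (q : rel 'I_l) :
  is_pop p -> is_pop q ->
  wilf_equiv (pop_sum p q) (pop_sum q p).
Proof.
move=> _ _ n _.
have := num_avoiders_pop_sum n p q; have := num_avoiders_pop_sum n q p.
rewrite (gap_sumC n q p 0) (gap_sumC n q p 1); lia.
Qed.
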